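(* Let $A$ be a race-free game and $\delta_A:D_A\to A^\perp\parallel A\parallel A$ the duplication map defined in the context. Then $D_A$ is deterministic (i.e. $\delta_A$ is a deterministic edc strategy) iff no two Opponent moves of $A$ are in immediate conflict: whenever $x$ is a configuration of $A$ and $a_1,a_2\notin x$ with $\mathrm{pol}_A(a_1)=\mathrm{pol}_A(a_2)=-$ and $x\cup\{a_1\}$, $x\cup\{a_2\}$ configurations, $x\cup\{a_1,a_2\}$ is a configuration of $A$.
   Context: A game $A$ is a prime event structure $(A,\le,\mathrm{Con})$ (partial order with finite down-sets; nonempty subset-closed family of finite consistent sets containing singletons with $X\in\mathrm{Con}$, $e\le e'\in X\Rightarrow X\cup\{e\}\in\mathrm{Con}$) with a polarity function $\mathrm{pol}_A:A\to\{+,-\}$; configurations are down-closed sets with all finite subsets consistent. It is race-free if $x\cup\{a\}$, $x\cup\{a'\}$ configurations with $a,a'$ of opposite polarity imply $x\cup\{a,a'\}$ is a configuration. $A^\perp$ reverses polarity. $A^\perp\parallel A\parallel A$ has events $(\{0\}\times A)\cup(\{1\}\times A)\cup(\{2\}\times A)$ with componentwise order, consistency (finite set consistent iff each component part is), and polarity (component 0 reversed). Duplication: a triple $(x,y_1,y_2)$ with $x$ a finite configuration of $A^\perp$ and $y_1,y_2$ finite configurations of $A$ is balanced if every $a\in y_1\cup y_2$ with $\mathrm{pol}_A(a)=+$ lies in $x$, and every $a\in x$ with $\mathrm{pol}_{A^\perp}(a)=+$ lies in $y_1$ or $y_2$. A choice function is $\chi:x^+\to\{1,2\}$ ($x^+$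 the events of $x$ positive in $A^\perp$) with $\chi(a)=i\Rightarrow a\in y_i$. The order $q(x,y_1,y_2;\chi)$ has underlying set $(\{0\}\times x)\cup(\{1\}\times y_1)\cup(\{2\}\times y_2)$ and the partial order generated by the order inherited from $A^\perp\parallel A\parallel A$ together with $(0,a)\le(i,a)$ for $a\in y_i$ with $\mathrm{pol}_A(a)=+$ ($i=1,2$), and $(\chi(a),a)\le(0,a)$ for $a\in x$ with $\mathrm{pol}_{A^\perp}(a)=+$. The edc $D_A$ has as events all such $q(x,y_1,y_2;\chi)$ possessing a top element, and $\delta_A(d)$ is the top element of $d$; $d\le d'$ iff the underlying set of $d$ is a down-closed subset of that of $d'$ and the order of $d$ is the restriction of that of $d'$; a finite $X\subseteq D_A$ is consistent iff $\delta_A$ of its down-closure is consistent in $A^\perp\parallel A\parallel A$; $d\equiv d'$ iff $\delta_A(d)=\delta_A(d')$; $\mathrm{pol}(d)$ is the polarity of $\delta_A(d)$. An edc with polarity $S$ (and any strategy with domain $S$) is deterministic if for every finite $X\subseteq S$, consistency of the set of negative events of the down-closure $[X]$ implies $X$ is consistent. *)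

From Stdlib Require Import List Relations.

Set Implicit Arguments.

Inductive polarity := Plus | Minus.

Definition neg_pol (p : polarity) : polarity :=
  match p with Plus => Minus | Minus => Plus end.

Definition finite {T : Type} (X : T -> Prop) : Prop :=
  exists l : list T, forall t, X t -> In t l.

Record game := Game {
  ev : Type;
  leA : ev -> ev -> Prop;
  ConA : (ev -> Prop) -> Prop;
  polA : ev -> polarity;
  leA_refl : forall e, leA e e;
  leA_antisym : forall e e', leA e e' -> leA e' e -> e = e';
  leA_trans : forall e1 e2 e3, leA e1 e2 -> leA e2 e3 -> leA e1 e3;
  leA_finite_down : forall e, finite (fun e' => leA e' e);
  ConA_finite : forall X, ConA X -> finite X;
  ConA_ext : forall X Y, ConA X -> (forall e, X e <-> Y e) -> ConA Y;
  ConA_nonempty : exists X, ConA X;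
  ConA_sub : forall X Y, ConA X -> (forall e, Y e -> X e) -> ConA Y;
  ConA_single : forall e, ConA (fun e' => e' = e);
  ConA_down : forall X e e', ConA X -> X e' -> leA e e' ->
                 ConA (fun z => X z \/ z = e)
}.

Section Game.
Variable A : game.

Definition configuration (x : ev A -> Prop) : Prop :=
  (forall e e', x e -> leA A e' e -> x e') /\
  (forall Y, finite Y -> (forall e, Y e -> x e) -> ConA A Y).

Definition add1 (x : ev A -> Prop) (a : ev A) : ev A -> Prop :=
  fun e => x e \/ e = a.

Definition race_free : Prop :=
  forall (x : ev A -> Prop) (a a' : ev A),
    configuration x -> polA A a' = neg_pol (polA A a) ->
    configuration (add1 x a) -> configuration (add1 x a') ->
    configuration (add1 (add1 x a) a').

Definition no_neg_conflict : Prop :=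
  forall (x : ev A -> Prop) (a1 a2 : ev A),
    configuration x -> ~ x a1 -> ~ x a2 ->
    polA A a1 = Minus -> polA A a2 = Minus ->
    configuration (add1 x a1) -> configuration (add1 x a2) ->
    configuration (add1 (add1 x a1) a2).

(* A^perp || A || A : components 0, 1, 2 *)
Inductive comp := C0 | C1 | C2.

Definition pev : Type := (comp * ev A)%type.

Definition polP (e : pev) : polarity :=
  match fst e with C0 => neg_pol (polA A (snd e)) | _ => polA A (snd e) end.

Definition leP (e e' : pev) : Prop := fst e = fst e' /\ leA A (snd e) (snd e').

Definition ConP (S : pev -> Prop) : Prop :=
  ConA A (fun a => S (C0, a)) /\ ConA A (fun a => S (C1, a)) /\
  ConA A (fun a => S (C2, a)).

(* configurations of A^perp are those of A (same order and consistency) *)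
Definition fin_config (x : ev A -> Prop) : Prop := configuration x /\ finite x.

Definition balanced (x y1 y2 : ev A -> Prop) : Prop :=
  (forall a, (y1 a \/ y2 a) -> polA A a = Plus -> x a) /\
  (forall a, x a -> neg_pol (polA A a) = Plus -> y1 a \/ y2 a).

(* chi : x^+ -> {1,2} with chi a = i -> a in y_i; values outside x^+ are irrelevant *)
Definition choice_fun (x y1 y2 : ev A -> Prop) (chi : ev A -> comp) : Prop :=
  forall a, x a -> neg_pol (polA A a) = Plus ->
    (chi a = C1 /\ y1 a) \/ (chi a = C2 /\ y2 a).

Definition qset (x y1 y2 : ev A -> Prop) (e : pev) : Prop :=
  match fst e with C0 => x (snd e) | C1 => y1 (snd e) | C2 => y2 (snd e) end.

Definition qstep (x y1 y2 : ev A -> Prop) (chi : ev A -> comp) (e e' : pev) : Prop :=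
  qset x y1 y2 e /\ qset x y1 y2 e' /\
  ( leP e e'
  \/ (exists a, e = (C0, a) /\ e' = (C1, a) /\ y1 a /\ polA A a = Plus)
  \/ (exists a, e = (C0, a) /\ e' = (C2, a) /\ y2 a /\ polA A a = Plus)
  \/ (exists a, e = (chi a, a) /\ e' = (C0, a) /\ x a /\ neg_pol (polA A a) = Plus)).

Definition qle (x y1 y2 : ev A -> Prop) (chi : ev A -> comp) (e e' : pev) : Prop :=
  qset x y1 y2 e /\ qset x y1 y2 e' /\ clos_refl_trans pev (qstep x y1 y2 chi) e e'.

(* events of D_A: q(x,y1,y2;chi) possessing a top element (recorded as dtop;
   the top element of a partial order is unique) *)
Record Dev := MkDev {
  dx : ev A -> Prop;
  dy1 : ev A -> Prop;
  dy2 : ev A -> Prop;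
  dchi : ev A -> comp;
  dtop : pev;
  dx_fc : fin_config dx;
  dy1_fc : fin_config dy1;
  dy2_fc : fin_config dy2;
  d_bal : balanced dx dy1 dy2;
  d_choice : choice_fun dx dy1 dy2 dchi;
  dtop_in : qset dx dy1 dy2 dtop;
  dtop_top : forall e, qset dx dy1 dy2 e -> qle dx dy1 dy2 dchi e dtop
}.

Definition Dset (d : Dev) : pev -> Prop := qset (dx d) (dy1 d) (dy2 d).
Definition Dord (d : Dev) : pev -> pev -> Prop := qle (dx d) (dy1 d) (dy2 d) (dchi d).

Definition delta (d : Dev) : pev := dtop d.

Definition leD (d d' : Dev) : Prop :=
  (forall e, Dset d e -> Dset d' e) /\
  (forall e e', Dset d e -> Dord d' e' e -> Dset d e') /\
  (forall e e', Dset d e -> Dset d e' -> (Dord d e e' <-> Dord d' e e')).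

Definition polD (d : Dev) : polarity := polP (delta d).

Definition downD (X : Dev -> Prop) (d : Dev) : Prop :=
  exists d', X d' /\ leD d d'.

Definition ConD (X : Dev -> Prop) : Prop :=
  ConP (fun e => exists d, downD X d /\ delta d = e).

Definition D_deterministic : Prop :=
  forall X : Dev -> Prop, finite X ->
    ConD (fun d => downD X d /\ polD d = Minus) -> ConD X.

End Game.

(* In a race-free game without immediate conflict between Opponent events, a finite down-closed
   set is consistent as soon as the events below its positive events are: peel off maximal events,
   two competing maximal ones being rejoined by race-freeness or by the hypothesis.  Each component
   of the down-closure of a finite X of D_A is such a set, its positive part being controlled by the
   tops of the negative events of D_A; hence determinism.
   Conversely, negative a1, a2 enabled at x are detected by the events of D_A copying an event c to
   components 0 and 1 (2 for c = a2): a negative event below such a copy cannot contain the Player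
   event (0, a_i) of A^perp, so the negative part of the copies lies in x, x + a1 and x + a2, and
   determinism makes x + a1 + a2 consistent. *)

From Stdlib Require Import List Relations Classical ClassicalEpsilon Lia.

Set Implicit Arguments.
Unset Strict Implicit.

Lemma finite_sub (T : Type) (P Q : T -> Prop) :
  finite P -> (forall t, Q t -> P t) -> finite Q.
Proof. intros [l Hl] H; exists l; auto. Qed.

Lemma finite_union (I T : Type) (l : list I) (P : I -> T -> Prop) :
  (forall i, finite (P i)) -> finite (fun t => exists i, In i l /\ P i t).
Proof.
  intros HP; induction l as [|i l IH].
  - exists nil; intros t [i [[] _]].
  - destruct (HP i) as [l1 H1]; destruct IH as [l2 H2].
    exists (l1 ++ l2); intros t [j [[<-|Hj] Ht]]; apply in_or_app; [left; auto|right].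
    apply H2; eauto.
Qed.

Lemma finite_remove_ind (T : Type) (P : (T -> Prop) -> Prop) :
  (forall U, finite U -> (forall t, U t -> P (fun u => U u /\ u <> t)) -> P U) ->
  forall U, finite U -> P U.
Proof.
  intros Hstep.
  set (dec := fun x y : T => excluded_middle_informative (x = y)).
  assert (H : forall n l U, length l < n -> (forall t, U t -> In t l) -> P U).
  { induction n as [|n IH]; intros l U Hlen Hl; [lia|].
    apply Hstep; [exists l; exact Hl|].
    intros t Ht; apply (IH (remove dec t l)).
    - pose proof (remove_length_lt dec l t (Hl t Ht)); lia.
    - intros u [Hu Hne]; apply in_in_remove; auto. }
  intros U [l Hl]; exact (H _ l U (le_n _) Hl).
Qed.

Lemma clos_rt_mono (T : Type) (R R' : relation T) :
  (forall u v, R u v -> R' u v) ->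
  forall u v, clos_refl_trans T R u v -> clos_refl_trans T R' u v.
Proof. intros H u v Huv; induction Huv; eauto using rt_step, rt_refl, rt_trans. Qed.

Section Duplication.
Variable A : game.

Definition down_closed (U : ev A -> Prop) : Prop :=
  forall a b, U a -> leA A b a -> U b.

Definition maximal (U : ev A -> Prop) (m : ev A) : Prop :=
  U m /\ forall u, U u -> leA A m u -> u = m.

Lemma down_closed_ext (U V : ev A -> Prop) :
  down_closed U -> (forall a, U a <-> V a) -> down_closed V.
Proof. intros HU HUV a b Ha Hba; apply HUV; apply HUV in Ha; eauto. Qed.

Lemma down_closed_remove_maximal (U : ev A -> Prop) (m : ev A) :
  down_closed U -> maximal U m -> down_closed (fun u => U u /\ u <> m).
Proof.
  intros HU [_ Hmax] a b [Ha Hne] Hba; split; [eauto|].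
  intros ->; apply Hne, Hmax; auto.
Qed.

Lemma maximal_remove (U : ev A -> Prop) (m m' : ev A) :
  maximal U m' -> m' <> m -> maximal (fun u => U u /\ u <> m) m'.
Proof. intros [Hm' Hmax] Hne; split; [auto|intros u [Hu _]; auto]. Qed.

Lemma exists_maximal_above (U : ev A -> Prop) :
  finite U -> forall s, U s -> exists m, maximal U m /\ leA A s m.
Proof.
  revert U; refine (finite_remove_ind (P := fun U => forall s, U s -> _) _).
  intros U _ IH s Hs.
  destruct (classic (exists t, U t /\ leA A s t /\ t <> s)) as [(t & Ht & Hst & Hne)|Hno].
  - destruct (IH s Hs t (conj Ht Hne)) as (m & [[Hm _] Hmax] & Htm).
    exists m; split; [split; [exact Hm|]|eapply leA_trans; eauto].
    intros u Hu Hmu; apply Hmax; [split; [exact Hu|]|exact Hmu].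
    intros ->; apply Hne, (leA_antisym A); [|exact Hst].
    eapply leA_trans; eauto.
  - exists s; split; [split; [exact Hs|]|apply leA_refl].
    intros u Hu Hsu; apply NNPP; intro Hne; apply Hno; eauto.
Qed.

Lemma down_con (e : ev A) : ConA A (fun b => leA A b e).
Proof.
  destruct (leA_finite_down A e) as [l Hl].
  assert (H : forall k, ConA A (fun b => b = e \/ (In b k /\ leA A b e))).
  { induction k as [|c k IH].
    - apply (ConA_ext A _ _ (ConA_single A e)); intros z; simpl; tauto.
    - destruct (classic (leA A c e)) as [Hc|Hc].
      + apply (ConA_ext A _ _ (ConA_down A _ c e IH (or_introl eq_refl) Hc)).
        intros z; simpl; split.
        * intros [[Hz|[Hz1 Hz2]]|Hz]; subst; auto.
        * intros [Hz|[[Hz1|Hz1] Hz2]]; subst; auto.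
      + apply (ConA_ext A _ _ IH); intros z; simpl; split.
        * intros [Hz|[Hz1 Hz2]]; auto.
        * intros [Hz|[[Hz1|Hz1] Hz2]]; subst; auto; contradiction. }
  apply (ConA_sub A _ _ (H l)); intros b Hb; right; auto.
Qed.

Lemma config_con (x U : ev A -> Prop) :
  configuration A x -> finite U -> (forall a, U a -> x a) -> ConA A U.
Proof. intros [_ H] ? ?; apply H; auto. Qed.

Lemma configuration_sub_con (x Y : ev A -> Prop) :
  down_closed x -> ConA A Y -> (forall a, x a -> Y a) -> configuration A x.
Proof. intros Hx HY HxY; split; [exact Hx|intros Z _ HZ; apply (ConA_sub A Y); auto]. Qed.

Lemma config_below_added (x : ev A -> Prop) (a b : ev A) :
  configuration A (add1 A x a) -> leA A b a -> b <> a -> x b.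
Proof. intros [Hd _] Hba Hne; destruct (Hd a b (or_intror eq_refl) Hba); tauto. Qed.

Lemma fc_sub (P Q : ev A -> Prop) :
  fin_config A P -> (forall a, Q a -> P a) -> down_closed Q -> fin_config A Q.
Proof.
  intros [[_ HP] Hf] HQ Hd; split; [split; [exact Hd|]|].
  - intros Y HY HYQ; apply HP; auto.
  - eapply finite_sub; eauto.
Qed.

Lemma down_fc (e : ev A) : fin_config A (fun b => leA A b e).
Proof.
  split; [split|].
  - intros a b Ha Hb; eapply leA_trans; eauto.
  - intros Y _ HY; apply (ConA_sub A _ _ (down_con e)); auto.
  - apply leA_finite_down.
Qed.

Lemma fc_guard (Q : Prop) (P : ev A -> Prop) :
  fin_config A P -> fin_config A (fun a => Q /\ P a).
Proof.
  intros HP; apply (fc_sub HP); [intros a [_ H]; exact H|].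
  intros a b [HQ Ha] Hba; split; [exact HQ|exact (proj1 (proj1 HP) a b Ha Hba)].
Qed.

Section NegativeExtension.
Hypothesis hrf : race_free A.
Hypothesis hnn : no_neg_conflict A.

Lemma configuration_add_back (U z : ev A -> Prop) (m m' : ev A) :
  down_closed U -> maximal U m' -> U m -> m <> m' ->
  ConA A (fun u => U u /\ u <> m') ->
  (forall w, z w <-> U w /\ w <> m /\ w <> m') ->
  configuration A (add1 A z m).
Proof.
  intros Hdown Hm' Hm Hne Hcon Hz.
  assert (Hequiv : forall w, U w /\ w <> m' <-> add1 A z m w).
  { intros w; unfold add1; rewrite Hz.
    destruct (classic (w = m)) as [->|]; intuition. }
  apply configuration_sub_con with (Y := fun u => U u /\ u <> m').
  - exact (down_closed_ext (down_closed_remove_maximal Hdown Hm') Hequiv).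
  - exact Hcon.
  - intros w; apply Hequiv.
Qed.

Lemma con_of_maximal_pair (U : ev A -> Prop) (m m' : ev A) :
  finite U -> down_closed U -> maximal U m -> maximal U m' -> m <> m' ->
  polA A m = Minus ->
  ConA A (fun u => U u /\ u <> m) -> ConA A (fun u => U u /\ u <> m') -> ConA A U.
Proof.
  intros Hfin Hdown Hm Hm' Hne Hpm Hcon Hcon'.
  set (z := fun w => U w /\ w <> m /\ w <> m').
  assert (Hz : configuration A z).
  { apply configuration_sub_con with (Y := fun u => U u /\ u <> m); [|exact Hcon|].
    - apply (down_closed_ext (U := fun w => (U w /\ w <> m) /\ w <> m')); [|unfold z; tauto].
      apply down_closed_remove_maximal; [|apply maximal_remove; auto].
      apply down_closed_remove_maximal; auto.
    - intros w (? & ? & ?); auto. }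
  assert (Hzm : configuration A (add1 A z m))
    by (apply (configuration_add_back Hdown Hm' (proj1 Hm)); auto; unfold z; tauto).
  assert (Hzm' : configuration A (add1 A z m'))
    by (apply (configuration_add_back Hdown Hm (proj1 Hm')); auto; unfold z; tauto).
  assert (Hboth : configuration A (add1 A (add1 A z m) m')).
  { destruct (polA A m') eqn:Epol.
    - apply hrf; auto; rewrite Epol, Hpm; reflexivity.
    - apply hnn; auto; unfold z; tauto. }
  apply (config_con Hboth Hfin); intros w Hw; unfold add1, z.
  destruct (classic (w = m)); destruct (classic (w = m')); tauto.
Qed.

(* If some event is below no positive one, it is below a
   negative maximal event m; either m lies above all of U (so U is inside the cone of m), or there
   is a second maximal event m', and race-freeness or [no_neg_conflict] puts m and m' back
   together. *)
Lemma con_of_positive_con (T : ev A -> Prop) :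
  ConA A T -> forall U, finite U -> down_closed U ->
  (forall a b, U a -> polA A a = Plus -> leA A b a -> T b) -> ConA A U.
Proof.
  intros HT; refine (finite_remove_ind (P := fun U => down_closed U -> _ -> _) _).
  intros U Hfin IH Hdown Hpos.
  assert (IHmax : forall m, maximal U m -> ConA A (fun u => U u /\ u <> m)).
  { intros m Hm; apply IH; [apply Hm|apply down_closed_remove_maximal; auto|].
    intros a b [Ha _]; eauto. }
  destruct (classic (forall s, U s -> exists a, U a /\ polA A a = Plus /\ leA A s a))
    as [Hall|Hnall].
  { apply (ConA_sub A T _ HT); intros s Hs.
    destruct (Hall s Hs) as (a & ? & ? & ?); eauto. }
  apply not_all_ex_not in Hnall; destruct Hnall as [s Hs].
  apply imply_to_and in Hs; destruct Hs as [Hs Hnpos].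
  destruct (exists_maximal_above Hfin Hs) as (m & Hm & Hsm).
  assert (Hpm : polA A m = Minus).
  { destruct (polA A m) eqn:E; [|reflexivity].
    exfalso; apply Hnpos; exists m; split; [apply Hm|auto]. }
  destruct (classic (forall z, U z -> leA A z m)) as [Hbelow|Hnbelow].
  { apply (ConA_sub A _ _ (down_con m)); auto. }
  apply not_all_ex_not in Hnbelow; destruct Hnbelow as [z Hz].
  apply imply_to_and in Hz; destruct Hz as [Hz Hzm].
  destruct (exists_maximal_above Hfin Hz) as (m' & Hm' & Hzm').
  apply (con_of_maximal_pair Hfin Hdown Hm Hm'); auto.
  intros ->; contradiction.
Qed.

End NegativeExtension.

Lemma qle_refl x y1 y2 chi (u : pev A) : qset x y1 y2 u -> qle x y1 y2 chi u u.
Proof. intros Hu; repeat split; auto; apply rt_refl. Qed.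

Lemma qle_trans x y1 y2 chi (u v w : pev A) :
  qle x y1 y2 chi u v -> qle x y1 y2 chi v w -> qle x y1 y2 chi u w.
Proof. intros (Hu & _ & Huv) (_ & Hw & Hvw); repeat split; eauto using rt_trans. Qed.

Lemma qle_step x y1 y2 chi (u v : pev A) : qstep x y1 y2 chi u v -> qle x y1 y2 chi u v.
Proof. intros H; pose proof H as (Hu & Hv & _); repeat split; auto; apply rt_step, H. Qed.

Lemma qstep_transfer x y1 y2 x' y1' y2' chi (u v : pev A) :
  qstep x y1 y2 chi u v -> qset x' y1' y2' u -> qset x' y1' y2' v ->
  qstep x' y1' y2' chi u v.
Proof.
  intros (_ & _ & H) Hu Hv; split; [exact Hu|split; [exact Hv|]].
  destruct H as [H|[(a & -> & -> & _ & Hp)|[(a & -> & -> & _ & Hp)|(a & -> & -> & _ & Hp)]]].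
  - left; exact H.
  - right; left; exists a; repeat split; auto.
  - right; right; left; exists a; repeat split; auto.
  - right; right; right; exists a; repeat split; auto.
Qed.

Lemma Dcomp_fc (d : Dev A) (c : comp) : fin_config A (fun a => Dset d (c, a)).
Proof. destruct c; [exact (dx_fc d)|exact (dy1_fc d)|exact (dy2_fc d)]. Qed.

Lemma Dset_le (d : Dev A) c a b : Dset d (c, a) -> leA A b a -> Dset d (c, b).
Proof. exact (proj1 (proj1 (Dcomp_fc d c)) a b). Qed.

Lemma Dord_le (d : Dev A) c a b : Dset d (c, a) -> leA A b a -> Dord d (c, b) (c, a).
Proof.
  intros Ha Hba; apply qle_step; split; [exact (Dset_le Ha Hba)|split; [exact Ha|]].
  left; split; auto.
Qed.

Lemma Dset_C0_of_positive (d : Dev A) c a :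
  Dset d (c, a) -> polA A a = Plus -> Dset d (C0, a).
Proof.
  intros Ha Hp; destruct c; [exact Ha| |]; apply (proj1 (d_bal d) a); auto.
Qed.

Lemma Dord_C0_positive (d : Dev A) c a :
  Dset d (c, a) -> c <> C0 -> polA A a = Plus -> Dord d (C0, a) (c, a).
Proof.
  intros Ha Hc Hp; apply qle_step; split; [exact (Dset_C0_of_positive Ha Hp)|split; [exact Ha|]].
  destruct c; [congruence|right; left|right; right; left]; exists a; auto.
Qed.

Lemma Dord_chi_C0 (d : Dev A) a :
  dx d a -> neg_pol (polA A a) = Plus -> Dord d (dchi d a, a) (C0, a).
Proof.
  intros Ha Hp; apply qle_step; split; [|split; [exact Ha|]].
  - destruct (d_choice d a Ha Hp) as [[-> Hy]|[-> Hy]]; exact Hy.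
  - right; right; right; exists a; auto.
Qed.

Section Restriction.
Variables (d : Dev A) (e : pev A).

Definition below (c : comp) (a : ev A) : Prop := Dord d (c, a) e.

Lemma qset_below u : qset (below C0) (below C1) (below C2) u <-> Dord d u e.
Proof. destruct u as [[] a]; reflexivity. Qed.

Lemma path_below s t :
  clos_refl_trans (pev A) (qstep (dx d) (dy1 d) (dy2 d) (dchi d)) s t -> Dord d t e ->
  clos_refl_trans (pev A) (qstep (below C0) (below C1) (below C2) (dchi d)) s t.
Proof.
  intros H; apply clos_rt_rtn1_iff in H; induction H as [|w t Hwt _ IH]; intros Hte.
  - apply rt_refl.
  - assert (Hwe : Dord d w e) by exact (qle_trans (qle_step Hwt) Hte).
    apply (rt_trans _ _ _ w); [exact (IH Hwe)|apply rt_step].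
    apply (qstep_transfer Hwt); apply qset_below; assumption.
Qed.

Lemma below_fc c : fin_config A (below c).
Proof.
  apply (fc_sub (Dcomp_fc d c)); [intros a Ha; apply Ha|].
  intros a b Ha Hba; exact (qle_trans (Dord_le (proj1 Ha) Hba) Ha).
Qed.

Lemma below_choice : choice_fun A (below C0) (below C1) (below C2) (dchi d).
Proof.
  intros a Ha Hp.
  assert (Hchi : Dord d (dchi d a, a) e) by exact (qle_trans (Dord_chi_C0 (proj1 Ha) Hp) Ha).
  destruct (d_choice d a (proj1 Ha) Hp) as [[Hc _]|[Hc _]]; rewrite Hc in Hchi; auto.
Qed.

Lemma below_balanced : balanced A (below C0) (below C1) (below C2).
Proof.
  split.
  - intros a [Ha|Ha] Hp; refine (qle_trans (Dord_C0_positive (proj1 Ha) _ Hp) Ha); discriminate.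
  - intros a Ha Hp; destruct (below_choice Ha Hp) as [[_ H]|[_ H]]; auto.
Qed.

Hypothesis He : Dset d e.

Lemma below_top_in : qset (below C0) (below C1) (below C2) e.
Proof. apply qset_below, qle_refl, He. Qed.

Lemma below_top u : qset (below C0) (below C1) (below C2) u ->
  qle (below C0) (below C1) (below C2) (dchi d) u e.
Proof.
  intros Hu; split; [exact Hu|split; [exact below_top_in|]].
  apply qset_below in Hu; apply (path_below (proj2 (proj2 Hu))), qle_refl, He.
Qed.

Definition Drestrict : Dev A :=
  MkDev (below_fc C0) (below_fc C1) (below_fc C2) below_balanced below_choice
    below_top_in below_top.

Lemma Drestrict_le : leD Drestrict d.
Proof.
  split; [|split].
  - intros u Hu; exact (proj1 (proj1 (qset_below u) Hu)).
  - intros u u' Hu Hu'; apply qset_below; exact (qle_trans Hu' (proj1 (qset_below u) Hu)).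
  - intros u u' Hu Hu'; pose proof (proj1 (qset_below u) Hu) as Hud;
      pose proof (proj1 (qset_below u') Hu') as Hud'; split.
    + intros (_ & _ & H); split; [apply Hud|split; [apply Hud'|]].
      refine (clos_rt_mono _ H); intros v w Hvw.
      apply (qstep_transfer Hvw); [exact (proj1 (proj1 (qset_below v) (proj1 Hvw)))|].
      exact (proj1 (proj1 (qset_below w) (proj1 (proj2 Hvw)))).
    + intros (_ & _ & H); split; [exact Hu|split; [exact Hu'|]].
      exact (path_below H Hud').
Qed.

End Restriction.

Definition Dunion (X : Dev A -> Prop) (c : comp) (a : ev A) : Prop :=
  exists d, X d /\ Dset d (c, a).

Definition delta_down (X : Dev A -> Prop) (c : comp) (a : ev A) : Prop :=
  exists d, downD X d /\ delta d = (c, a).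

Lemma finite_Dunion (X : Dev A -> Prop) c : finite X -> finite (Dunion X c).
Proof.
  intros [l Hl].
  apply (finite_sub (finite_union l (fun d => proj2 (Dcomp_fc d c)))).
  intros a [d [Hd Ha]]; exists d; auto.
Qed.

Lemma down_closed_Dunion (X : Dev A -> Prop) c : down_closed (Dunion X c).
Proof. intros a b [d [Hd Ha]] Hba; exists d; split; [exact Hd|exact (Dset_le Ha Hba)]. Qed.

Lemma delta_down_Dunion (X : Dev A -> Prop) c a : delta_down X c a -> Dunion X c a.
Proof.
  intros (d & (d' & Hd' & Hle) & Hdelta); exists d'; split; [exact Hd'|].
  apply (proj1 Hle); rewrite <- Hdelta; apply dtop_in.
Qed.

Lemma Dunion_delta_down (X : Dev A -> Prop) c a : Dunion X c a -> delta_down X c a.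
Proof.
  intros (d & Hd & Ha); exists (Drestrict Ha); split; [|reflexivity].
  exists d; split; [exact Hd|apply Drestrict_le].
Qed.

Lemma delta_down_sub_Dunion (X : Dev A -> Prop) (P : Dev A -> Prop) c a :
  delta_down (fun d => downD X d /\ P d) c a -> Dunion X c a.
Proof.
  intros Ha; destruct (delta_down_Dunion Ha) as (d & ((d' & Hd' & Hle) & _) & Had).
  exists d'; split; [exact Hd'|exact (proj1 Hle _ Had)].
Qed.

Lemma ConD_of_Dunion (X : Dev A -> Prop) : (forall c, ConA A (Dunion X c)) -> ConD X.
Proof.
  intros H; split; [|split]; [apply (ConA_sub A _ _ (H C0))|apply (ConA_sub A _ _ (H C1))
    |apply (ConA_sub A _ _ (H C2))]; intros a; apply delta_down_Dunion.
Qed.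

Lemma D_deterministic_of_no_neg_conflict :
  race_free A -> no_neg_conflict A -> D_deterministic A.
Proof.
  intros hrf hnn X HX [HNeg _].
  assert (H0 : ConA A (Dunion X C0)).
  { apply (con_of_positive_con hrf hnn HNeg (finite_Dunion C0 HX) (@down_closed_Dunion X C0)).
    intros a b (d & Hd & Ha) Hp Hba.
    apply Dunion_delta_down; exists (Drestrict Ha); split; [split|].
    - exists d; split; [exact Hd|apply Drestrict_le].
    - unfold polD, polP; simpl; rewrite Hp; reflexivity.
    - exact (Dord_le Ha Hba). }
  apply ConD_of_Dunion; intros c.
  apply (con_of_positive_con hrf hnn H0 (finite_Dunion c HX) (@down_closed_Dunion X c)).
  intros a b (d & Hd & Ha) Hp Hba; exists d; split; [exact Hd|].
  exact (Dset_le (Dset_C0_of_positive Ha Hp) Hba).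
Qed.

Definition side (b : bool) : comp := if b then C1 else C2.

Section PrimeEvent.
Variables (e : ev A) (b : bool).

Let px : ev A -> Prop := fun a => leA A a e.
Let py1 : ev A -> Prop := fun a => b = true /\ leA A a e.
Let py2 : ev A -> Prop := fun a => b = false /\ leA A a e.
Let pchi : ev A -> comp := fun _ => side b.

Lemma qset_prime c a : qset px py1 py2 (c, a) <-> (c = C0 \/ c = side b) /\ leA A a e.
Proof.
  unfold qset, px, py1, py2; destruct c, b; simpl; intuition congruence.
Qed.

Lemma prime_balanced : balanced A px py1 py2.
Proof.
  split; [intros a [[_ H]|[_ H]] _; exact H|intros a H _; destruct b; [left|right]; split; auto].
Qed.

Lemma prime_choice : choice_fun A px py1 py2 pchi.
Proof. intros a H _; destruct b; [left|right]; repeat split; auto. Qed.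

Definition prime_top : pev A :=
  match polA A e with Plus => (side b, e) | Minus => (C0, e) end.

Lemma prime_top_in : qset px py1 py2 prime_top.
Proof. unfold prime_top; destruct (polA A e); apply qset_prime; auto using leA_refl. Qed.

(* Every (c, a) climbs to (c, e); then one balancing (positive [e]) or choice (negative [e])
   step joins the two copies of [e]. *)
Lemma prime_top_max u : qset px py1 py2 u -> qle px py1 py2 pchi u prime_top.
Proof.
  destruct u as [c a]; intros Hu.
  apply qset_prime in Hu as Hu'; destruct Hu' as [Hce Hae].
  assert (Hin : forall c', c' = C0 \/ c' = side b -> qset px py1 py2 (c', e))
    by (intros c' Hc'; apply qset_prime; auto using leA_refl).
  apply (qle_trans (v := (c, e))).
  { apply qle_step; split; [exact Hu|split; [exact (Hin c Hce)|]].
    left; split; [reflexivity|exact Hae]. }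
  unfold prime_top; destruct (polA A e) eqn:Hpol; destruct Hce as [-> | ->];
    try (apply qle_refl, Hin; auto; fail);
    (apply qle_step; split; [apply Hin; auto|split; [apply Hin; auto|]]).
  - right; destruct b; [left|right; left]; exists e; repeat split; auto using leA_refl.
  - right; right; right; exists e; repeat split; [apply leA_refl|rewrite Hpol; reflexivity].
Qed.

Definition Dprime : Dev A :=
  MkDev (down_fc e) (fc_guard (b = true) (down_fc e)) (fc_guard (b = false) (down_fc e))
    prime_balanced prime_choice prime_top_in prime_top_max.

Lemma Dprime_C0_maximal : polA A e = Minus -> forall t, Dord Dprime (C0, e) t -> t = (C0, e).
Proof.
  intros Hpol t (_ & _ & H); apply clos_rt_rt1n_iff in H.
  remember (C0, e) as s eqn:Es; revert Es.
  induction H as [|s w t Hsw _ IH]; intros Es; [reflexivity|subst s].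
  enough (Hw : w = (C0, e)) by (rewrite (IH Hw); exact Hw).
  destruct Hsw as (_ & Hw & Hstep); apply qset_prime in Hw.
  destruct Hstep as [[Hc Hle]|[(a & Ea & _ & _ & Hp)|[(a & Ea & _ & _ & Hp)|(a & Ea & _)]]].
  - destruct w as [c a]; simpl in *; subst c; f_equal; apply (leA_antisym A); [apply Hw|exact Hle].
  - injection Ea as <-; congruence.
  - injection Ea as <-; congruence.
  - simpl in Ea; destruct b; discriminate.
Qed.

Lemma Dprime_excludes_negative_C0 (d : Dev A) :
  leD d Dprime -> polD d = Minus -> polA A e = Minus -> ~ Dset d (C0, e).
Proof.
  intros Hle Hpol Hpe Hd.
  assert (Htop : Dord Dprime (C0, e) (dtop d))
    by exact (proj1 (proj2 (proj2 Hle) _ _ Hd (dtop_in d)) (dtop_top d _ Hd)).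
  apply (Dprime_C0_maximal Hpe) in Htop.
  unfold polD, delta, polP in Hpol; rewrite Htop in Hpol; simpl in Hpol.
  rewrite Hpe in Hpol; discriminate.
Qed.

End PrimeEvent.

Section CopyingEvents.
Variables (x : ev A -> Prop) (a1 a2 : ev A) (Y : ev A -> Prop).
Hypotheses (Hx : configuration A x) (Hp1 : polA A a1 = Minus) (Hp2 : polA A a2 = Minus).
Hypotheses (K1 : configuration A (add1 A x a1)) (K2 : configuration A (add1 A x a2)).
Hypothesis HY : forall c, Y c -> add1 A (add1 A x a1) a2 c.

Definition copy_side (c : ev A) : bool :=
  if excluded_middle_informative (c = a2) then false else true.

Definition copies (d : Dev A) : Prop := exists c, Y c /\ d = Dprime c (copy_side c).

Lemma finite_copies : finite Y -> finite copies.
Proof.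
  intros [lY HlY]; exists (map (fun c => Dprime c (copy_side c)) lY).
  intros d [c [Hc ->]]; apply (in_map (fun c => Dprime c (copy_side c))); auto.
Qed.

Lemma negative_copies_C0 a :
  delta_down (fun d => downD copies d /\ polD d = Minus) C0 a -> x a.
Proof.
  intros Ha; destruct (delta_down_Dunion Ha) as (d & ((d' & (c & Hc & ->) & Hle) & Hpol) & Had).
  assert (Hac : leA A a c) by exact (proj2 (proj1 (qset_prime _ _ _ _) (proj1 Hle _ Had))).
  destruct (HY Hc) as [[Hxc| ->]| ->].
  - exact (proj1 Hx c a Hxc Hac).
  - apply (config_below_added K1 Hac); intros ->.
    exact (Dprime_excludes_negative_C0 Hle Hpol Hp1 Had).
  - apply (config_below_added K2 Hac); intros ->.
    exact (Dprime_excludes_negative_C0 Hle Hpol Hp2 Had).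
Qed.

Lemma copies_C1 a : Dunion copies C1 a -> add1 A x a1 a.
Proof.
  intros (d & (c & Hc & ->) & Had); apply qset_prime in Had as [[Hside|Hside] Hac];
    [discriminate|].
  apply (proj1 K1 c a); [|exact Hac].
  unfold copy_side in Hside; destruct (excluded_middle_informative (c = a2)); [discriminate|].
  destruct (HY Hc) as [H| ->]; [exact H|contradiction].
Qed.

Lemma copies_C2 a : Dunion copies C2 a -> add1 A x a2 a.
Proof.
  intros (d & (c & Hc & ->) & Had); apply qset_prime in Had as [[Hside|Hside] Hac];
    [discriminate|].
  unfold copy_side in Hside.
  destruct (excluded_middle_informative (c = a2)) as [->|]; [|discriminate].
  exact (proj1 K2 a2 a (or_intror eq_refl) Hac).
Qed.

Lemma ConD_copies : D_deterministic A -> finite Y -> ConD copies.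
Proof.
  intros Hdet HYfin.
  pose proof (finite_copies HYfin) as HX.
  set (Neg := fun d => downD copies d /\ polD d = Minus).
  assert (HNfin : forall c, finite (delta_down Neg c))
    by (intros c; exact (finite_sub (finite_Dunion c HX) (@delta_down_sub_Dunion _ _ c))).
  apply (Hdet copies HX); split; [|split].
  - exact (config_con Hx (HNfin C0) negative_copies_C0).
  - exact (config_con K1 (HNfin C1) (fun a Ha => copies_C1 (delta_down_sub_Dunion Ha))).
  - exact (config_con K2 (HNfin C2) (fun a Ha => copies_C2 (delta_down_sub_Dunion Ha))).
Qed.

Lemma con_of_ConD_copies : ConD copies -> ConA A Y.
Proof.
  intros HC; apply (ConA_sub A _ _ (proj1 HC)); intros c Hc.
  apply Dunion_delta_down; exists (Dprime c (copy_side c)); split; [exists c; auto|].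
  apply qset_prime; split; [left; reflexivity|apply leA_refl].
Qed.

End CopyingEvents.

Lemma no_neg_conflict_of_D_deterministic : D_deterministic A -> no_neg_conflict A.
Proof.
  intros Hdet x a1 a2 Hx _ _ Hp1 Hp2 K1 K2; split.
  - intros e e' [[He| ->]| ->] Hle.
    + left; left; exact (proj1 Hx e e' He Hle).
    + left; exact (proj1 K1 a1 e' (or_intror eq_refl) Hle).
    + destruct (proj1 K2 a2 e' (or_intror eq_refl) Hle) as [H| ->]; [left; left|right]; auto.
  - intros Y HYfin HY.
    exact (con_of_ConD_copies (ConD_copies Hx Hp1 Hp2 K1 K2 HY Hdet HYfin)).
Qed.

End Duplication.

Theorem mainTheorem16 (A : game) (hrf : race_free A) :
  D_deterministic A <-> no_neg_conflict A.
Proof.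
  split; [apply no_neg_conflict_of_D_deterministic|].
  exact (D_deterministic_of_no_neg_conflict hrf).
Qed.
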